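(* Let $n\geq 3$ and $m\geq 1$. The matching $\mu$ on the face poset of $\Delta_m^{n,2}$ has no critical cells of dimension $4$ or more.
   Context: $\Delta_m^{n,2}=\mathrm{VR}(\{0,\ldots,m\}^n;2)$, where $\{0,\ldots,m\}^n$ carries the Manhattan metric $d(x,y)=\sum_i|x_i-y_i|$ and $\mathrm{VR}(X;r)$ is the complex of finite subsets of diameter $\leq r$. Order the vertices as $v_1\prec\cdots\prec v_N$ ($N=(m+1)^n$) in the anti-lexicographic order ($x\prec y$ iff at the largest index $i$ with $x_i\neq y_i$, $x_i<y_i$). Let $T_0$ be the set of all simplices of $\Delta_m^{n,2}$, including the empty simplex. For $i=1,\ldots,N$ put $S_i=\{\sigma\in T_{i-1}: v_i\notin\sigma,\ \sigma\cup\{v_i\}\in T_{i-1}\}$, $\mu(\sigma)=\sigma\cup\{v_i\}$ for $\sigma\in S_i$, and $T_i=T_{i-1}\setminus(S_i\cup\{\sigma\cup\{v_i\}:\sigma\in S_i\})$. The critical cells of $\mu$ are the simplices in $T_N$; the dimension of a simplex is its cardinality minus one. *)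

From mathcomp Require Import all_boot.
Set Implicit Arguments. Unset Strict Implicit. Unset Printing Implicit Defensive.

Definition vertex (n m : nat) := {ffun 'I_n -> 'I_m.+1}.

Definition mdist n m (x y : vertex n m) : nat :=
  \sum_(i < n) ((x i - y i) + (y i - x i)).

(* Simplices of VR({0..m}^n; 2): finite subsets (including the empty one)
   of diameter <= 2. *)
Definition is_simplex n m (s : {set vertex n m}) : bool :=
  [forall x in s, forall y in s, mdist x y <= 2].

Definition antilex_lt n m (x y : vertex n m) : bool :=
  [exists i : 'I_n, (x i < y i) && [forall j : 'I_n, (i < j) ==> (x j == y j)]].
Definition antilex_le n m (x y : vertex n m) : bool :=
  (x == y) || antilex_lt x y.

Definition ordered_vertices n m : seq (vertex n m) :=
  sort (@antilex_le n m) (enum (vertex n m)).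

Definition T0 n m : {set {set vertex n m}} := [set s | is_simplex s].

Definition Sset n m (v : vertex n m) (T : {set {set vertex n m}}) :=
  [set s in T | (v \notin s) && (v |: s \in T)].

Definition mstep n m (T : {set {set vertex n m}}) (v : vertex n m) :=
  T :\: (Sset v T :|: [set v |: s | s in Sset v T]).

Definition critical_cells n m : {set {set vertex n m}} :=
  foldl (@mstep n m) (T0 n m) (ordered_vertices n m).

Definition sdim n m (s : {set vertex n m}) : nat := #|s| - 1.

(* Let s be a simplex with at least five vertices and u the anti-lexicographically
   least vertex such that s + u is a simplex.  No earlier vertex v can be added to
   s - u: if d(u,v) <= 2 then s + v would be a simplex as well, and if d(u,v) >= 3
   then the (at least four) vertices of s - u, all within distance 2 of both u and v
   and all above u, lie on geodesics from u to a single point z and within distance 1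
   of z, which leaves room for at most three of them.  Nor can v be added to s + u,
   since s + v is not a simplex.  Hence s - u and s + u both survive until step u,
   where they are matched with each other, so s is not critical. *)

From mathcomp Require Import all_boot zify.

Set Implicit Arguments.
Unset Strict Implicit.
Unset Printing Implicit Defensive.

Section AntiLex.
Variables n m : nat.
Implicit Types x y z : vertex n m.

Lemma antilex_ltP x y :
  reflect (exists2 i : 'I_n, x i < y i & forall j : 'I_n, i < j -> x j = y j)
          (antilex_lt x y).
Proof.
apply: (iffP existsP) => [[i /andP[lt_i /forallP top_i]] | [i lt_i top_i]].
  by exists i => // j lt_ij; apply/eqP; exact: implyP (top_i j) lt_ij.
by exists i; rewrite lt_i; apply/forallP => j; apply/implyP => /top_i ->.
Qed.

Lemma antilex_lt_trans : transitive (@antilex_lt n m).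
Proof.
move=> y x z /antilex_ltP[i lt_xy top_i] /antilex_ltP[j lt_yz top_j].
apply/antilex_ltP; case: (ltngtP i j) => [lt_ij | lt_ji | /val_inj eq_ij].
- exists j; first by rewrite top_i.
  by move=> k lt_jk; rewrite top_i ?top_j // (ltn_trans lt_ij).
- exists i; first by rewrite -top_j.
  by move=> k lt_ik; rewrite top_i ?top_j // (ltn_trans lt_ji).
- subst j; exists i; first exact: ltn_trans lt_yz.
  by move=> k lt_ik; rewrite top_i ?top_j.
Qed.

Lemma antilex_le_trans : transitive (@antilex_le n m).
Proof.
move=> y x z /predU1P[-> // | lt_xy] /predU1P[<- | lt_yz].
  by rewrite /antilex_le lt_xy orbT.
by rewrite /antilex_le (antilex_lt_trans lt_xy lt_yz) orbT.
Qed.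

Lemma antilex_le_total : total (@antilex_le n m).
Proof.
move=> x y; rewrite /antilex_le; case: eqVneq => [// | neq_xy] /=.
have [i0 neq_i0] : exists i, x i != y i.
  apply/existsP; apply: contraNT neq_xy => /existsPn eq_xy.
  by apply/eqP/ffunP => i; apply/eqP; rewrite -[_ == _]negbK eq_xy.
case: (@arg_maxnP _ i0 (fun i => x i != y i) val neq_i0) => i neq_i max_i.
have top_i (j : 'I_n) : i < j -> x j = y j.
  by move=> lt_ij; apply/eqP; apply: contraTT lt_ij => /max_i; rewrite -leqNgt.
case: (ltngtP (x i) (y i)) => [lt_i | lt_i | /val_inj eq_i].
- by apply/orP; left; apply/antilex_ltP; exists i.
- by apply/orP; right; apply/antilex_ltP; exists i => // j /top_i.
- by rewrite eq_i eqxx in neq_i.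
Qed.

Lemma mem_ordered_vertices x : x \in ordered_vertices n m.
Proof. by rewrite mem_sort mem_enum. Qed.

Lemma pairwise_ordered_vertices : pairwise (@antilex_lt n m) (ordered_vertices n m).
Proof.
have : pairwise [rel x y | antilex_le x y && (x != y)] (ordered_vertices n m).
  rewrite pairwise_relI -uniq_pairwise sort_uniq enum_uniq andbT.
  by rewrite -sorted_pairwise ?sort_sorted //; [exact: antilex_le_total | exact: antilex_le_trans].
by apply: sub_pairwise => x y /andP[/predU1P[-> | //]]; rewrite eqxx.
Qed.

Lemma ordered_vertices_first (P : pred (vertex n m)) x : P x ->
  exists l1 u l2, [/\ ordered_vertices n m = rcons l1 u ++ l2, P u,
    {in l1, forall v, ~~ P v /\ antilex_lt v u}
  & forall p, P p -> p != u -> antilex_lt u p].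
Proof.
move=> Px; have has_P : has P (ordered_vertices n m).
  by apply/hasP; exists x; rewrite ?mem_ordered_vertices.
have := pairwise_ordered_vertices; have := mem_ordered_vertices.
case: (split_find has_P) => u l1 l2 Pu /hasPn nP_l1 mem_l lt_l.
move: lt_l; rewrite pairwise_cat pairwise_rcons.
case/and3P=> /allrelP lt_l1u_l2 /andP[/allP lt_l1_u _] _.
exists l1, u, l2; split=> // [v l1_v | p Pp neq_pu]; first by rewrite nP_l1 ?lt_l1_u.
have := mem_l p; rewrite mem_cat mem_rcons in_cons (negbTE neq_pu) /=.
case/orP=> [/nP_l1 | l2_p]; first by rewrite Pp.
by apply: lt_l1u_l2; rewrite ?mem_rcons ?mem_head.
Qed.

End AntiLex.

Lemma leq_sum_gap (I : finType) (F G : I -> nat) i k :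
  (forall j, F j <= G j) -> F i + k <= G i -> \sum_j F j + k <= \sum_j G j.
Proof.
move=> leFG gap_i; rewrite (bigD1 i) //= [leqRHS](bigD1 i) //= addnAC.
by apply: leq_add gap_i _; apply: leq_sum => j _; exact: leFG.
Qed.

Definition absdiff (a b : nat) := (a - b) + (b - a).

Lemma absdiff_eq0 a b : (absdiff a b == 0) = (a == b).
Proof. by rewrite addn_eq0 !subn_eq0 -eqn_leq. Qed.

Section Manhattan.
Variables n m : nat.
Implicit Types x y z u w p : vertex n m.

Lemma mdistE x y : mdist x y = \sum_i absdiff (x i) (y i).
Proof. by []. Qed.

Lemma mdist_sym x y : mdist x y = mdist y x.
Proof. by rewrite !mdistE; apply: eq_bigr => i _; rewrite /absdiff addnC. Qed.

Lemma mdistxx x : mdist x x = 0.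
Proof. by rewrite mdistE big1 // => i _; rewrite /absdiff subnn. Qed.

Lemma card_diff_le_mdist x y : #|[set i | x i != y i]| <= mdist x y.
Proof.
rewrite -sum1_card big_mkcond mdistE; apply: leq_sum => i _.
by rewrite inE; case: ifP => //; rewrite lt0n absdiff_eq0.
Qed.

Lemma mdist_le1_support p z a : mdist p z <= 1 -> p a != z a ->
  absdiff (p a) (z a) = 1 /\ forall i, i != a -> p i = z i.
Proof.
rewrite mdistE (bigD1 a) //= -[p a != z a]/(p a != z a :> nat) -absdiff_eq0 -lt0n.
move=> le1 gt0_a; set S := (X in _ + X <= 1) in le1.
have /eqP : S = 0 by lia.
rewrite sum_nat_eq0 => /forall_inP S0; split=> [|i /S0]; first by lia.
by rewrite absdiff_eq0 => /eqP/val_inj.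
Qed.

Definition between x y z :=
  forall i, absdiff (x i) (y i) + absdiff (y i) (z i) = absdiff (x i) (z i).

Lemma mdist_between x y z : between x y z -> mdist x y + mdist y z = mdist x z.
Proof. by move=> btw; rewrite !mdistE -big_split; apply: eq_bigr => i _; exact: btw. Qed.

Lemma between_of_mdist x y z : mdist x y + mdist y z < mdist x z + 2 -> between x y z.
Proof.
move=> lt2 i; apply/eqP; apply: contraTT lt2 => neq_i; rewrite -leqNgt.
rewrite !mdistE -big_split /=; apply: (@leq_sum_gap _ _ _ i) => [j|];
  by move: neq_i; rewrite /absdiff; lia.
Qed.

Section NearGeodesic.
Variables (u z : vertex n m) (tau : {set vertex n m}).
Hypothesis tau_between : {in tau, forall p, between u p z}.
Hypothesis tau_near_z : {in tau, forall p, mdist p z <= 1}.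

Let diff_z p := [pick i | p i != z i].

Lemma diff_z_inj : {in tau &, injective diff_z}.
Proof.
move=> p q tau_p tau_q; rewrite /diff_z.
case: pickP => [a neq_pa | eq_pz]; case: pickP => [b neq_qb | eq_qz] //; last first.
  by move=> _; apply/ffunP => i; move: (eq_pz i) (eq_qz i) => /negbFE/eqP -> /negbFE/eqP ->.
case=> eq_ab; subst b.
have [p_a p_off] := mdist_le1_support (tau_near_z tau_p) neq_pa.
have [q_a q_off] := mdist_le1_support (tau_near_z tau_q) neq_qb.
apply/ffunP => i; case: (eqVneq i a) => [-> | neq_ia]; last by rewrite p_off ?q_off.
apply: val_inj => /=; move: (tau_between tau_p a) (tau_between tau_q a) p_a q_a.
by rewrite /absdiff; lia.
Qed.

Lemma card_near_geodesicD1 : #|tau :\ z| <= mdist u z.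
Proof.
apply: leq_trans (card_diff_le_mdist u z).
have inj : {in tau :\ z &, injective diff_z}.
  by move=> p q /setD1P[_ tau_p] /setD1P[_ tau_q]; exact: diff_z_inj.
rewrite -(card_in_imset inj) -[leqRHS](card_imset _ (@Some_inj _)).
apply: subset_leq_card; apply/subsetP => _ /imsetP[p /setD1P[neq_pz tau_p] ->].
rewrite /diff_z; case: pickP => [a neq_pa | eq_pz]; last first.
  by case/eqP: neq_pz; apply/ffunP => i; move/negbFE/eqP: (eq_pz i).
rewrite imset_f // inE; apply: contra neq_pa => /eqP eq_uz; apply/eqP/val_inj => /=.
by move: (tau_between tau_p a); rewrite eq_uz /absdiff; lia.
Qed.

Lemma card_near_geodesic : {in tau, forall p, mdist u p <= 2} -> #|tau| <= 3.
Proof.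
move=> tau_near_u; case: (set_0Vmem tau) => [-> | [p tau_p]]; first by rewrite cards0.
have := mdist_between (tau_between tau_p).
have := card_near_geodesicD1; rewrite (cardsD1 z tau); set k := #|tau :\ z|.
case: (boolP (z \in tau)) => [tau_z | _] /=.
  by have := tau_near_u z tau_z; lia.
by have := tau_near_u p tau_p; have := tau_near_z tau_p; lia.
Qed.

End NearGeodesic.

Lemma between_antilex_top u p w i :
  w i < u i -> (forall j : 'I_n, i < j -> w j = u j) ->
  between u p w -> antilex_lt u p -> p i = u i.
Proof.
move=> lt_wu top_i btw /antilex_ltP[j lt_up top_j].
case: (ltngtP i j) => [lt_ij | lt_ji | /val_inj eq_ij].
- by move: (btw j) lt_up; rewrite top_i // /absdiff; lia.
- by rewrite top_j.
- by subst j; move: (btw i) lt_wu lt_up; rewrite /absdiff; lia.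
Qed.

Lemma mdist_le2_of_common_nbhs u w (tau : {set vertex n m}) :
  4 <= #|tau| -> antilex_lt w u -> {in tau, forall p, antilex_lt u p} ->
  {in tau, forall p, mdist u p <= 2} -> {in tau, forall p, mdist p w <= 2} ->
  mdist u w <= 2.
Proof.
move=> card_tau /antilex_ltP[i lt_wu top_i] lt_u near_u near_w.
rewrite leqNgt; apply/negP => far_uw.
have btw : {in tau, forall p, between u p w}.
  by move=> p tau_p; apply: between_of_mdist; move: (near_u p tau_p) (near_w p tau_p); lia.
have p_i : {in tau, forall p, p i = u i}.
  by move=> p tau_p; apply: between_antilex_top lt_wu _ (btw p tau_p) (lt_u p tau_p) => j /top_i.
pose z : vertex n m := [ffun j => if j == i then u j else w j].
suff: #|tau| <= 3 by lia.
apply: (@card_near_geodesic u z) near_u => p tau_p.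
- move=> j; rewrite /z ffunE; case: eqVneq => [-> | _]; last exact: btw.
  by rewrite p_i // /absdiff subnn.
- rewrite -ltnS; apply: leq_trans (near_w p tau_p); rewrite -addn1 !mdistE.
  apply: (@leq_sum_gap _ _ _ i) => [j|]; rewrite /z ffunE; last first.
    by rewrite eqxx p_i // /absdiff subnn; move: lt_wu; lia.
  by case: eqVneq => [-> | _] //; rewrite p_i // /absdiff subnn.
Qed.

End Manhattan.

Section Simplices.
Variables n m : nat.
Implicit Types (s t : {set vertex n m}) (u w x : vertex n m).

Lemma simplexP s : reflect {in s &, forall x y, mdist x y <= 2} (is_simplex s).
Proof.
apply: (iffP forall_inP) => [s_simp x y xs ys | s_simp x xs].
  exact: forall_inP (s_simp x xs) y ys.
by apply/forall_inP => y ys; exact: s_simp.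
Qed.

Lemma simplexS s t : s \subset t -> is_simplex t -> is_simplex s.
Proof.
by move=> /subsetP sub_st /simplexP t_simp; apply/simplexP => x y /sub_st xt /sub_st; exact: t_simp.
Qed.

Lemma simplexU1 x s : is_simplex s -> {in s, forall y, mdist x y <= 2} -> is_simplex (x |: s).
Proof.
move=> /simplexP s_simp near_x; apply/simplexP => y z.
case/setU1P=> [-> | ys] /setU1P[-> | zs]; rewrite ?mdistxx ?near_x //.
  by rewrite mdist_sym near_x.
exact: s_simp.
Qed.

Lemma simplex_exchange s u w :
  is_simplex (u |: s) -> 4 <= #|s :\ u| -> antilex_lt w u ->
  {in s :\ u, forall p, antilex_lt u p} ->
  is_simplex (w |: (s :\ u)) -> is_simplex (w |: s).
Proof.
move=> us_simp card_su lt_wu lt_u ws_simp.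
have near_u : {in s :\ u, forall p, mdist u p <= 2}.
  by move=> p /setD1P[_ sp]; apply: (simplexP _ us_simp); [exact: setU11 | exact: setU1r].
have near_w : {in s :\ u, forall p, mdist p w <= 2}.
  by move=> p sup; apply: (simplexP _ ws_simp); [exact: setU1r | exact: setU11].
have d_uw := mdist_le2_of_common_nbhs card_su lt_wu lt_u near_u near_w.
apply: simplexU1 => [|p sp]; first exact: simplexS (subsetUr _ _) us_simp.
case: (eqVneq p u) => [-> | neq_pu]; first by rewrite mdist_sym.
by rewrite mdist_sym near_w // !inE neq_pu sp.
Qed.

End Simplices.

Section GreedyMatching.
Variables n m : nat.
Implicit Types (T : {set {set vertex n m}}) (s : {set vertex n m}) (u v : vertex n m).
Implicit Type l : seq (vertex n m).

Lemma foldl_mstep_sub T l : foldl (@mstep n m) T l \subset T.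
Proof.
elim: l T => [|v l IH] T /=; first exact: subxx.
exact: subset_trans (IH _) (subsetDl _ _).
Qed.

Lemma mem_foldl_mstep T l s :
  s \in T -> {in l, forall v, v |: s \notin T} -> s \in foldl (@mstep n m) T l.
Proof.
elim: l T => [|v l IH] T //= sT l_out; have v_out := l_out v (mem_head _ _).
apply: IH => [|x lx]; last first.
  by apply: contra (l_out x _) => [/(subsetP (subsetDl _ _)) // | ]; rewrite in_cons lx orbT.
rewrite /mstep in_setD sT andbT in_setU negb_or inE (negbTE v_out) !andbF /=.
by apply/imsetP=> -[t _ def_s]; rewrite def_s setUA setUid -def_s sT in v_out.
Qed.

Lemma mstep_matched T v s : s \in T -> v \notin s -> v |: s \in T ->
  (s \notin mstep T v) && (v |: s \notin mstep T v).
Proof.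
move=> sT vs vsT; have S_s : s \in Sset v T by rewrite inE sT vs vsT.
by rewrite !in_setD !in_setU S_s imset_f ?orbT.
Qed.

Lemma notin_foldl_mstep T l1 u l2 s :
  s :\ u \in T -> u |: s \in T ->
  {in l1, forall v, v |: (s :\ u) \notin T} -> {in l1, forall v, v |: (u |: s) \notin T} ->
  s \notin foldl (@mstep n m) T (rcons l1 u ++ l2).
Proof.
move=> T_su T_us l1_su l1_us; set T1 := foldl (@mstep n m) T l1.
have u_su : u |: (s :\ u) = u |: s by apply/setP => x; rewrite !inE; case: eqVneq.
have T1_su : s :\ u \in T1 := mem_foldl_mstep T_su l1_su.
have T1_us : u |: (s :\ u) \in T1 by rewrite u_su; exact: mem_foldl_mstep.
have /andP[su_out] := mstep_matched T1_su (negbT (setD11 u s)) T1_us.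
rewrite u_su => us_out.
rewrite foldl_cat foldl_rcons -/T1; apply: contra _ (_ : s \notin mstep T1 u).
  exact/subsetP/foldl_mstep_sub.
case: (boolP (u \in s)) => [/setD1K def_s | us]; first by rewrite -def_s u_su.
have /setDidPl su_s : [disjoint s & [set u]] by rewrite disjoint_sym disjoints1.
by rewrite -su_s.
Qed.

End GreedyMatching.

Theorem lemma4p10 (n m : nat) :
  3 <= n -> 1 <= m ->
  forall s : {set vertex n m}, s \in critical_cells n m -> sdim s < 4.
Proof.
move=> _ _ s crit_s; rewrite /sdim ltnNge; apply/negP => big_s.
have s_simp : is_simplex s.
  by have := subsetP (foldl_mstep_sub _ _) s crit_s; rewrite inE.
have simp_s : {in s, forall p, is_simplex (p |: s)}.
  by move=> p; rewrite -sub1set => /setUidPr ->.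
have [x0 s_x0] : exists x0, x0 \in s by apply/set0Pn; rewrite -card_gt0; lia.
have [l1 [u [l2 [def_vs su_simp l1_below above_u]]]] :=
  @ordered_vertices_first n m (fun v => is_simplex (v |: s)) x0 (simp_s x0 s_x0).
have card_su : 4 <= #|s :\ u|.
  by move: big_s; rewrite (cardsD1 u s); set k := #|s :\ u|; case: (u \in s); lia.
move: crit_s; apply/negP; rewrite /critical_cells def_vs; apply: notin_foldl_mstep.
- by rewrite inE (simplexS (subsetDl _ _) s_simp).
- by rewrite inE.
- move=> v /l1_below[nsimp_v lt_vu]; rewrite inE; apply: contra nsimp_v.
  apply: simplex_exchange su_simp card_su lt_vu _.
  by move=> p /setD1P[neq_pu sp]; exact: above_u (simp_s p sp) neq_pu.
- move=> v /l1_below[nsimp_v _]; rewrite inE; apply: contra nsimp_v.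
  by apply: simplexS; rewrite setUCA subsetUr.
Qed.
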